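(* Let $k\ge2$, $p\in(0,1)$, $q=1-p$, and $R^{(k)}_n(p)=\mathbb{E}[Y(k,n,p)]$. Then $R^{(k)}_1(p)=1$, for $n\ge2$ $$R^{(k)}_n(p)=n-\frac1q\sum_{i=1}^{n-1}(n-i)\,s^{(k)}_i\,(p^{k-1}q)^i,$$ and $$\sum_{n\ge1}R^{(k)}_n(p)z^n=\frac{z}{(1-z)^2}\left(1-\frac1qS^{(k)}(p^{k-1}qz)\right).$$
   Context: Matchbox process: fix integers $k\ge 2$, $n\ge 1$ and $p\in(0,1)$, $q=1-p$. Initially $k$ boxes each contain $n$ matches. At each time step, independently, with probability $p$ a match is removed from a box currently containing the largest number of matches, and with probability $q$ from a box currently containing the smallest number (ties broken arbitrarily). A diagonal state is a state in which all $k$ boxes contain the same number of matches. Let $Y=Y(k,n,p)$ be the smallest $i\in\{1,\dots,n-1\}$ such that the process reaches the diagonal state in which every box contains $n-i$ matches (before any box is empty), with the convention $Y=n$ if no such $i$ exists. $s^{(k)}_i=\frac{k-1}{ki-1}\binom{ki-1}{i-1}$ and $S^{(k)}(z)=\sum_{i\ge1}s^{(k)}_iz^i$. *)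

From mathcomp Require Import all_boot all_order all_algebra.
From mathcomp Require Import all_classical all_reals all_analysis.
Set Implicit Arguments. Unset Strict Implicit. Unset Printing Implicit Defensive.
Import Order.TTheory GRing.Theory Num.Theory.
Local Open Scope ring_scope.

(* A state of the matchbox process: the list of the k box contents. *)
Definition maxbox (s : seq nat) : nat := \max_(x <- s) x.
Definition minbox (s : seq nat) : nat := \big[minn/head 0%N s]_(x <- s) x.

Definition remove_at (s : seq nat) (i : nat) : seq nat :=
  set_nth 0%N s i (nth 0%N s i).-1.

(* One step: b = true means "remove from a largest box" (probability p),
   b = false means "remove from a smallest box" (probability q = 1 - p). *)
Definition mstep (s : seq nat) (b : bool) : seq nat :=
  if b then remove_at s (index (maxbox s) s)
  else remove_at s (index (minbox s) s).

Definition mstate (k n : nat) (bs : seq bool) (t : nat) : seq nat :=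
  foldl mstep (nseq k n) (take t bs).

Definition reaches_diag (k n : nat) (bs : seq bool) (m : nat) : bool :=
  has (fun t => mstate k n bs t == nseq k m) (iota 0 (size bs).+1).

Definition Yval (k n : nat) (bs : seq bool) : nat :=
  head n [seq i <- iota 1 n.-1 | reaches_diag k n bs (n - i)].

Definition pweight {R : numDomainType} (p : R) (bs : seq bool) : R :=
  \prod_(b <- bs) (if b then p else 1 - p).

(* R^{(k)}_n(p) = E[Y(k,n,p)]: the first k*n steps determine Y. *)
Definition Rexp {R : numDomainType} (k n : nat) (p : R) : R :=
  \sum_(bs : (k * n).-tuple bool) pweight p bs * (Yval k n bs)%:R.

Definition scoef {R : numFieldType} (k i : nat) : R :=
  (k.-1)%:R / (k * i).-1%:R * ('C((k * i).-1, i.-1))%:R.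

From mathcomp Require Import all_boot all_order all_algebra.
From mathcomp Require Import all_classical all_reals all_analysis.
From mathcomp Require Import zify ring lra.
Import Order.TTheory GRing.Theory Num.Theory.
Import numFieldNormedType.Exports.
Set Implicit Arguments. Unset Strict Implicit. Unset Printing Implicit Defensive.

(* The excess of a state, its number of matches minus k times its smallest
   box, performs a walk on nat that ignores everything else about the state:
   from 0 it jumps to k-1, otherwise it moves down by 1 with probability p and
   up by k-1 with probability q.  Since one match disappears per step, the
   diagonal state (n-i,...,n-i) is reached exactly when the walk started at 0
   vanishes at time k i, and it can only vanish at multiples of k.  Hence
   Y = 1 + sum_(j < n-1) [the walk avoids 0 up to time k (j+1)], and R_n is a
   sum of survival probabilities of the walk restarted at k-1.  The walk from
   h first hits 0 at time k u + h with the ballot-type probability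
   h/(ku+h) C(ku+h,u) p^((k-1)u+h) q^u, which for h = k-1 is
   s_(u+1) (p^(k-1) q)^(u+1) / q; summing gives R_n.  The generating function
   is then a Cauchy product with sum_m m z^m = z/(1-z)^2, convergence being
   controlled by sum_i s_i (p^(k-1) q)^i <= q. *)


Section ExtremalBoxes.
Local Open Scope nat_scope.

Lemma big_selective_mem (T : eqType) (op : T -> T -> T) d s :
  (forall x y, (op x y == x) || (op x y == y)) ->
  \big[op/d]_(x <- s) x \in d :: s.
Proof.
move=> opsel; rewrite big_seq; elim/big_ind: _ => [|x y|x xs]; rewrite ?mem_head //.
- by case/orP: (opsel x y) => /eqP->.
- by rewrite inE xs orbT.
Qed.

Lemma minn_selective x y : (minn x y == x) || (minn x y == y).
Proof. by rewrite /minn; case: ltnP; rewrite eqxx ?orbT. Qed.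

Lemma maxn_selective x y : (maxn x y == x) || (maxn x y == y).
Proof. by rewrite /maxn; case: ltnP; rewrite eqxx ?orbT. Qed.

Lemma minbox_le s x : x \in s -> minbox s <= x.
Proof.
rewrite /minbox; move: (head 0 s) => d.
elim: s => [|a s IH] //=; rewrite inE big_cons => /predU1P[->|/IH le_x].
  exact: geq_minl.
by rewrite geq_min le_x orbT.
Qed.

Lemma minbox_mem s : s != [::] -> minbox s \in s.
Proof.
case: s => // a s _; have := big_selective_mem a (a :: s) minn_selective.
by rewrite /minbox inE => /predU1P[->|//]; rewrite mem_head.
Qed.

Lemma maxbox_ge s x : x \in s -> x <= maxbox s.
Proof. by move=> xs; apply: leq_bigmax_seq. Qed.

Lemma maxbox_mem s : s != [::] -> maxbox s \in s.
Proof.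
case: s => // a s _; have := big_selective_mem 0 (a :: s) maxn_selective.
rewrite -/(maxbox _) inE => /predU1P[M0|//]; rewrite M0.
by have := maxbox_ge (mem_head a s); rewrite M0 leqn0 => /eqP <-; rewrite mem_head.
Qed.

Lemma eq_minbox s m : m \in s -> {in s, forall x, m <= x} -> minbox s = m.
Proof.
move=> ms lb; apply/eqP; rewrite eqn_leq minbox_le //= lb //.
by apply: minbox_mem; apply: contraTneq ms => ->.
Qed.

Lemma minbox_nseq k n : 0 < k -> minbox (nseq k n) = n.
Proof.
by move=> k0; apply: eq_minbox => [|x]; rewrite mem_nseq ?k0 ?eqxx // => /andP[_ /eqP->].
Qed.

Lemma leq_sumn_lower_bound s m : {in s, forall x, m <= x} -> size s * m <= sumn s.
Proof.
elim: s => //= a s IH lb; rewrite mulSn leq_add ?lb ?mem_head //.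
by apply: IH => x xs; rewrite lb // inE xs orbT.
Qed.

Lemma sumn_lower_bound_nseq s m : {in s, forall x, m <= x} ->
  sumn s = size s * m -> s = nseq (size s) m.
Proof.
elim: s => //= a s IH lb; rewrite mulSn => e.
have lbs : {in s, forall x, m <= x} by move=> x xs; rewrite lb // inE xs orbT.
have := lb a (mem_head a s); have := leq_sumn_lower_bound lbs.
move: e; set S := sumn s; set M := size s * m => e hS ha.
have am : a = m by lia.
by rewrite am; congr cons; apply: IH lbs _; lia.
Qed.

Lemma sumn_minbox_nseq s : sumn s = size s * minbox s -> s = nseq (size s) (minbox s).
Proof. by apply: sumn_lower_bound_nseq => x; apply: minbox_le. Qed.

Lemma maxbox_minboxP s : s != [::] ->
  (maxbox s == minbox s) = (sumn s == size s * minbox s).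
Proof.
move=> sne; apply/eqP/eqP => [Mm|/sumn_minbox_nseq e].
  have /all_pred1P e : all (pred1 (minbox s)) s.
    by apply/allP => x xs; rewrite /= eqn_leq minbox_le // -Mm maxbox_ge.
  by rewrite {1}e sumn_nseq mulnC.
apply/eqP; rewrite eqn_leq minbox_le ?maxbox_mem // andbT.
have : maxbox s \in nseq (size s) (minbox s) by rewrite -e maxbox_mem.
by rewrite mem_nseq => /andP[_ /eqP->].
Qed.

End ExtremalBoxes.

Section OneStep.
Local Open Scope nat_scope.

Lemma size_remove_at s i : i < size s -> size (remove_at s i) = size s.
Proof. by move=> hi; rewrite /remove_at size_set_nth; apply/maxn_idPr. Qed.

Lemma nth_remove_at s i j :
  nth 0 (remove_at s i) j = if j == i then (nth 0 s i).-1 else nth 0 s j.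
Proof. by rewrite /remove_at nth_set_nth. Qed.

Lemma sumn_remove_at s i : i < size s -> 0 < nth 0 s i ->
  (sumn (remove_at s i)).+1 = sumn s.
Proof.
rewrite /remove_at; elim: s i => [|a s IH] [|i] //= hi hv; first lia.
by rewrite -(IH i) // addnS.
Qed.

Lemma minbox_remove_min s : s != [::] -> 0 < minbox s ->
  minbox (remove_at s (index (minbox s) s)) = (minbox s).-1.
Proof.
move=> sne m0; have hi : index (minbox s) s < size s by rewrite index_mem minbox_mem.
apply: eq_minbox => [|x /(nthP 0) [j]].
  apply/(nthP 0); exists (index (minbox s) s); first by rewrite size_remove_at.
  by rewrite nth_remove_at eqxx nth_index ?minbox_mem.
rewrite size_remove_at // nth_remove_at => hj <-; case: eqP => _.
  by rewrite nth_index ?minbox_mem.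
exact: leq_trans (leq_pred _) (minbox_le (mem_nth 0 hj)).
Qed.

Lemma minbox_remove_above_min s i : i < size s -> minbox s < nth 0 s i ->
  minbox (remove_at s i) = minbox s.
Proof.
move=> hi lt_min; have sne : s != [::] by case: s hi {lt_min}.
have hm : index (minbox s) s < size s by rewrite index_mem minbox_mem.
apply: eq_minbox => [|x /(nthP 0) [j]].
  apply/(nthP 0); exists (index (minbox s) s); first by rewrite size_remove_at.
  rewrite nth_remove_at; case: eqP => [e|_]; last by rewrite nth_index ?minbox_mem.
  by move: lt_min; rewrite -e nth_index ?minbox_mem // ltnn.
rewrite size_remove_at // nth_remove_at => hj <-; case: eqP => _.
  by rewrite -ltnS prednK // (leq_ltn_trans _ lt_min).
exact: minbox_le (mem_nth 0 hj).
Qed.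

Lemma size_mstep s b : s != [::] -> size (mstep s b) = size s.
Proof.
by move=> sne; rewrite /mstep; case: b; rewrite size_remove_at // index_mem
  ?maxbox_mem ?minbox_mem.
Qed.

Lemma minbox_mstep s b : s != [::] -> minbox (mstep s b) <= minbox s.
Proof.
move=> sne; suff le_min i : i < size s -> minbox (remove_at s i) <= minbox s.
  by rewrite /mstep; case: b; apply: le_min; rewrite index_mem ?maxbox_mem ?minbox_mem.
move=> hi; have hm : index (minbox s) s < size (remove_at s i).
  by rewrite size_remove_at // index_mem minbox_mem.
apply: leq_trans (minbox_le (mem_nth 0 hm)) _.
by rewrite nth_remove_at; case: eqP => [<-|_]; rewrite nth_index ?minbox_mem ?leq_pred.
Qed.

Lemma sumn_mstep s b : s != [::] -> 0 < minbox s -> (sumn (mstep s b)).+1 = sumn s.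
Proof.
move=> sne m0; rewrite /mstep; case: b; apply: sumn_remove_at;
  rewrite ?index_mem ?maxbox_mem ?minbox_mem ?nth_index ?maxbox_mem ?minbox_mem //.
exact: leq_trans m0 (minbox_le (maxbox_mem sne)).
Qed.

(* The excess [g] of a state with [k] boxes (matches minus [k] times the
   minimum) after one move: if [g = 0] all boxes are equal and the minimum
   drops, otherwise a largest-box move keeps the minimum and a smallest-box
   move lowers it. *)
Definition walk_step (k g : nat) (b : bool) : nat :=
  if g == 0 then k.-1 else if b then g.-1 else g + k.-1.

Lemma foldl_walk_step_lb k g l : g <= foldl (walk_step k) g l + size l.
Proof.
elim: l g => /= [|b l IH] g; first by rewrite addn0.
by have := IH (walk_step k g b); rewrite addnS /walk_step; case: eqP; case: b; lia.
Qed.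

Lemma foldl_walk_step_mod k g l : 0 < k ->
  foldl (walk_step k) g l + size l = g %[mod k].
Proof.
move=> k0; elim: l g => /= [|b l IH] g; first by rewrite addn0.
rewrite addnS -addn1 -modnDml IH modnDml /walk_step.
case: eqP => [->|/eqP g0]; first by rewrite addn1 prednK // modnn mod0n.
case: b; first by rewrite addn1 prednK // lt0n.
by rewrite -addnA addn1 prednK // modnDr.
Qed.

Lemma mstep_excess s b g : s != [::] -> 0 < minbox s ->
  sumn s = size s * minbox s + g ->
  sumn (mstep s b) = size s * minbox (mstep s b) + walk_step (size s) g b.
Proof.
move=> sne m0 e; have := sumn_mstep b sne m0.
have dec_min : size s * (minbox s).-1 + size s = size s * minbox s.
  by rewrite -mulnSr prednK.
have hmin : index (minbox s) s < size s by rewrite index_mem minbox_mem.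
have hmax : index (maxbox s) s < size s by rewrite index_mem maxbox_mem.
rewrite /walk_step; have [g0|gpos] := eqVneq g 0.
  have /eqP Ms : maxbox s == minbox s by rewrite maxbox_minboxP // e g0 addn0.
  have -> : mstep s b = remove_at s (index (minbox s) s) by rewrite /mstep Ms; case: b.
  rewrite minbox_remove_min //; move: e dec_min; rewrite g0.
  set X := size s * _; set Y := size s * _; lia.
case: b; rewrite /mstep.
  rewrite minbox_remove_above_min ?nth_index ?maxbox_mem //.
    by move: e gpos; set X := size s * _; lia.
  rewrite ltn_neqAle minbox_le ?maxbox_mem // andbT eq_sym maxbox_minboxP // e.
  by move: gpos; set X := size s * _; lia.
rewrite minbox_remove_min //; move: e dec_min gpos.
set X := size s * _; set Y := size s * _; lia.
Qed.

End OneStep.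

Section Trajectory.
Local Open Scope nat_scope.
Variables (k n : nat) (bs : seq bool).
Hypothesis k_gt0 : 0 < k.

Definition walk (g : nat) (t : nat) : nat := foldl (walk_step k) g (take t bs).

Lemma mstate0 : mstate k n bs 0 = nseq k n.
Proof. by rewrite /mstate take0. Qed.

Lemma walk0 g : walk g 0 = g.
Proof. by rewrite /walk take0. Qed.

Lemma mstateS t : t < size bs -> mstate k n bs t.+1 = mstep (mstate k n bs t) (nth true bs t).
Proof. by move=> ht; rewrite /mstate (take_nth true ht) foldl_rcons. Qed.

Lemma walkS g t : t < size bs -> walk g t.+1 = walk_step k (walk g t) (nth true bs t).
Proof. by move=> ht; rewrite /walk (take_nth true ht) foldl_rcons. Qed.

Lemma foldl_take_split (S : Type) (f : S -> bool -> S) x t' t : t' <= t ->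
  foldl f x (take t bs) = foldl f (foldl f x (take t' bs)) (drop t' (take t bs)).
Proof. by move=> le; rewrite -foldl_cat -{1}(cat_take_drop t' (take t bs)) take_takel. Qed.

Lemma size_mstate t : size (mstate k n bs t) = k.
Proof.
suff size_foldl s l : s != [::] -> size (foldl mstep s l) = size s.
  by rewrite size_foldl ?size_nseq // -size_eq0 size_nseq -lt0n.
elim: l s => //= b l IH s sne.
have sne' : mstep s b != [::] by rewrite -size_eq0 size_mstep // size_eq0.
by rewrite IH // size_mstep.
Qed.

Lemma mstate_neq0 t : mstate k n bs t != [::].
Proof. by rewrite -size_eq0 size_mstate -lt0n. Qed.

Lemma minbox_mstate_mono t' t : t' <= t ->
  minbox (mstate k n bs t) <= minbox (mstate k n bs t').
Proof.
move=> le; rewrite /mstate (foldl_take_split _ _ le) -/(mstate k n bs t').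
move: (drop _ _) (mstate k n bs t') (mstate_neq0 t'); elim=> //= b l IH s sne.
have sne' : mstep s b != [::] by rewrite -size_eq0 size_mstep // size_eq0.
exact: leq_trans (IH _ sne') (minbox_mstep b sne).
Qed.

Lemma walk_lipschitz g t' t : t' <= t -> walk g t' <= walk g t + (t - t').
Proof.
move=> le; rewrite /walk (foldl_take_split _ _ le) -/(walk g t').
apply: leq_trans (foldl_walk_step_lb k (walk g t') (drop t' (take t bs))) _.
by rewrite leq_add2l size_drop size_take_min; lia.
Qed.

Lemma walk_mod t : t <= size bs -> walk 0 t + t = 0 %[mod k].
Proof. by move=> ht; rewrite /walk -{2}(size_takel ht) foldl_walk_step_mod. Qed.

(* Needs every earlier minimum positive: [remove_at] truncates at 0. *)
Lemma mstate_invariant t : t <= size bs ->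
  (forall t', t' < t -> 0 < minbox (mstate k n bs t')) ->
  sumn (mstate k n bs t) + t = k * n /\
  sumn (mstate k n bs t) = k * minbox (mstate k n bs t) + walk 0 t.
Proof.
elim: t => [|t IH] ht pos.
  by rewrite mstate0 walk0 sumn_nseq minbox_nseq // mulnC !addn0.
have [sum_t exc_t] := IH (ltnW ht) (fun t' lt => pos t' (ltnW lt)).
have sne := mstate_neq0 t; have m0 := pos t (ltnSn t).
rewrite mstateS // walkS //; split.
  by have := sumn_mstep (nth true bs t) sne m0; lia.
have := @mstep_excess _ (nth true bs t) (walk 0 t) sne m0.
by rewrite size_mstate; apply.
Qed.

Lemma mstate_diag_time t i : t <= size bs -> i < n ->
  mstate k n bs t = nseq k (n - i) -> t = k * i /\ walk 0 t = 0.
Proof.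
move=> ht lt_in ediag.
have pos t' : t' < t -> 0 < minbox (mstate k n bs t').
  move=> /ltnW /minbox_mstate_mono; rewrite ediag minbox_nseq //.
  by apply: leq_trans; rewrite subn_gt0.
have [] := mstate_invariant ht pos; rewrite ediag sumn_nseq minbox_nseq //.
have : k * (n - i) + k * i = k * n by rewrite -mulnDr subnK // ltnW.
rewrite mulnC; set A := k * (n - i); set B := k * i; lia.
Qed.

Lemma walk0_mstate_diag i : k * i <= size bs -> i < n ->
  walk 0 (k * i) = 0 -> mstate k n bs (k * i) = nseq k (n - i).
Proof.
move=> hs lt_in w0.
have split_n : k * (n - i) + k * i = k * n by rewrite -mulnDr subnK // ltnW.
have pos t : t < k * i -> 0 < minbox (mstate k n bs t).
  elim/ltn_ind: t => t IHt lt_t.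
  have [sum_t exc_t] := mstate_invariant (leq_trans (ltnW lt_t) hs)
    (fun t' lt => IHt t' lt (ltn_trans lt lt_t)).
  have := walk_lipschitz 0 (ltnW lt_t); rewrite w0 add0n => w_le.
  have : k <= k * (n - i) by rewrite leq_pmulr // subn_gt0.
  rewrite lt0n; apply: contraTneq => M0; rewrite -ltnNge.
  move: sum_t exc_t w_le split_n; rewrite M0 muln0.
  set A := k * (n - i); set B := k * i; lia.
have [] := mstate_invariant hs pos; rewrite w0 addn0 => sum_t exc_t.
have min_t : minbox (mstate k n bs (k * i)) = n - i.
  by apply/eqP; rewrite -(eqn_pmul2l k_gt0); apply/eqP; lia.
have sumn_t : sumn (mstate k n bs (k * i)) =
    size (mstate k n bs (k * i)) * minbox (mstate k n bs (k * i)).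
  by rewrite size_mstate exc_t.
by rewrite (sumn_minbox_nseq sumn_t) size_mstate min_t.
Qed.

End Trajectory.

Section FirstDiagonal.
Local Open Scope nat_scope.

Lemma reaches_diag_walk k n bs i : 0 < k -> size bs = k * n -> i < n ->
  reaches_diag k n bs (n - i) = (walk k bs 0 (k * i) == 0).
Proof.
move=> k0 sz lt_in; apply/hasP/eqP => [[t]|w0].
  rewrite mem_iota sz add0n ltnS => /andP[_ ht] /eqP ediag.
  have ht' : t <= size bs by rewrite sz.
  by have [<- ->] := mstate_diag_time k0 ht' lt_in ediag.
exists (k * i); first by rewrite mem_iota sz add0n ltnS leq_pmul2l // (ltnW lt_in).
by apply/eqP; rewrite walk0_mstate_diag // sz leq_pmul2l // (ltnW lt_in).
Qed.

Lemma head_filter_iota (P : pred nat) m L :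
  head (m + L) [seq i <- iota m L | P i] =
  m + \sum_(j < L) all (fun i => ~~ P i) (iota m j.+1).
Proof.
elim: L m => [|L IH] m; first by rewrite big_ord0 addn0.
rewrite /= big_ord_recl /=; case: (P m) => /=.
  by rewrite big1 ?addn0.
by rewrite -addSnnS IH add1n addSnnS.
Qed.

Definition walk_avoids0 k g (bs : seq bool) : bool :=
  all (fun t => walk k bs g t != 0) (iota 1 (size bs)).

Lemma walk_take k bs g L t : t <= L -> walk k (take L bs) g t = walk k bs g t.
Proof. by move=> tL; rewrite /walk take_takel. Qed.

Lemma walk_cons k g b bs t : walk k (b :: bs) g t.+1 = walk k bs (walk_step k g b) t.
Proof. by []. Qed.

Lemma walk_avoids0_cons k g b bs :
  walk_avoids0 k g (b :: bs) = (walk_step k g b != 0) && walk_avoids0 k (walk_step k g b) bs.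
Proof. by rewrite /walk_avoids0 /= (iotaDl 1 1) all_map walk_cons walk0. Qed.

Lemma walk_avoids0_multiples k bs j : 0 < k -> k * j <= size bs ->
  all (fun i => walk k bs 0 (k * i) != 0) (iota 1 j) =
  walk_avoids0 k 0 (take (k * j) bs).
Proof.
move=> k0 hs; rewrite /walk_avoids0 size_takel //.
apply/allP/allP => avoid t; rewrite mem_iota add1n ltnS => /andP[t_gt0 t_le].
  rewrite walk_take //; apply: contraTneq isT => w0.
  have /dvdnP [i ti] : k %| t.
    by have := walk_mod k0 (leq_trans t_le hs); rewrite w0 add0n mod0n => /eqP.
  have : i \in iota 1 j.
    rewrite mem_iota add1n ltnS; apply/andP; split.
      by move: t_gt0; rewrite ti muln_gt0 => /andP[].
    by rewrite -(leq_pmul2l k0) mulnC -ti.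
  by move=> /avoid; rewrite mulnC -ti w0.
have kt_le : k * t <= k * j by rewrite leq_pmul2l.
rewrite -(@walk_take k bs 0 (k * j) (k * t) kt_le); apply: avoid.
by rewrite mem_iota add1n ltnS muln_gt0 k0 t_gt0.
Qed.

Lemma Yval_avoids0 k n bs : 0 < k -> size bs = k * n -> 0 < n ->
  Yval k n bs = 1 + \sum_(j < n.-1) walk_avoids0 k 0 (take (k * j.+1) bs).
Proof.
move=> k0 sz n0; rewrite /Yval.
rewrite (@eq_in_filter _ _ (fun i => walk k bs 0 (k * i) == 0)); last first.
  by move=> i; rewrite mem_iota => /andP[_ lt_in]; apply: reaches_diag_walk => //; lia.
rewrite -{1}(prednK n0) -add1n head_filter_iota; congr (_ + _).
apply: eq_bigr => j _; rewrite walk_avoids0_multiples // sz leq_pmul2l //.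
by have := ltn_ord j; lia.
Qed.

End FirstDiagonal.

Local Open Scope ring_scope.

Section CoinExpectation.
Variables (R : numDomainType) (p : R).

Definition coin_expect (L : nat) (F : seq bool -> R) : R :=
  \sum_(t : L.-tuple bool) pweight p t * F t.

Lemma coin_expect0 F : coin_expect 0 F = F [::].
Proof.
rewrite /coin_expect (eq_bigr (fun _ => pweight p [::] * F [::])); last first.
  by move=> t _; rewrite (tuple0 t).
by rewrite sumr_const card_tuple expn0 /pweight big_nil mul1r mulr1n.
Qed.

Lemma coin_expectS L F : coin_expect L.+1 F =
  p * coin_expect L (fun bs => F (true :: bs)) +
  (1 - p) * coin_expect L (fun bs => F (false :: bs)).
Proof.
rewrite /coin_expect.
pose cons_tuple (x : bool * L.-tuple bool) : L.+1.-tuple bool := [tuple of x.1 :: x.2].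
have cons_bij : bijective cons_tuple.
  exists (fun t => (thead t, [tuple of behead t])) => [[b t]|t].
    by rewrite /= theadE; congr pair; apply: val_inj.
  by rewrite /cons_tuple /= [in RHS](tuple_eta t).
rewrite (reindex cons_tuple); last exact: onW_bij.
rewrite -(pair_bigA _ (fun b t => pweight p (cons_tuple (b, t)) * F (cons_tuple (b, t)))).
rewrite big_bool /= !mulr_sumr.
by congr (_ + _); apply: eq_bigr => t _; rewrite /pweight big_cons mulrA.
Qed.

Lemma eq_coin_expect L F G : (forall bs, size bs = L -> F bs = G bs) ->
  coin_expect L F = coin_expect L G.
Proof. by move=> FG; apply: eq_bigr => t _; rewrite FG // size_tuple. Qed.

Lemma coin_expect_cst L c : coin_expect L (fun _ => c) = c.
Proof.
elim: L => [|L IH]; first by rewrite coin_expect0.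
by rewrite coin_expectS IH -mulrDl addrC subrK mul1r.
Qed.

Lemma coin_expect_take L M F : (L <= M)%N ->
  coin_expect M (fun bs => F (take L bs)) = coin_expect L F.
Proof.
elim: L M F => [|L IH] M F le_LM.
  by rewrite coin_expect0 -(coin_expect_cst M (F [::])); apply: eq_coin_expect => bs _; rewrite take0.
case: M le_LM => [//|M] le_LM; rewrite !coin_expectS /=.
by rewrite (IH M (fun bs => F (true :: bs))) // (IH M (fun bs => F (false :: bs))).
Qed.

Lemma coin_expectDl L c F : coin_expect L (fun bs => c + F bs) = c + coin_expect L F.
Proof.
rewrite /coin_expect; under eq_bigr do rewrite mulrDr.
by rewrite big_split /= -/(coin_expect L (fun _ => c)) coin_expect_cst.
Qed.

Lemma coin_expect_sum L m (G : 'I_m -> seq bool -> R) :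
  coin_expect L (fun bs => \sum_(j < m) G j bs) = \sum_(j < m) coin_expect L (G j).
Proof.
by rewrite /coin_expect; under eq_bigr do rewrite mulr_sumr; rewrite exchange_big.
Qed.

Lemma coin_expect_ge0 L F : 0 <= p <= 1 -> (forall bs, 0 <= F bs) -> 0 <= coin_expect L F.
Proof.
move=> /andP[p0 p1] F0; apply: sumr_ge0 => t _; rewrite mulr_ge0 //.
by apply: prodr_ge0 => -[] _; rewrite ?subr_ge0.
Qed.

End CoinExpectation.

Lemma first_passage_binomial_rec k h v : (0 < k)%N -> (0 < h)%N ->
  (h * 'C(k * v.+1 + h, v.+1) * (k * v.+1 + h).-1 =
   (k * v.+1 + h) * (h.-1 * 'C((k * v.+1 + h).-1, v.+1) +
                     (h + k.-1) * 'C((k * v.+1 + h).-1, v)))%N.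
Proof.
move=> k0 h0; set N := (k * v.+1 + h)%N; set c := 'C(N, v.+1).
have e1 := mul_bin_down N v.+1; have e2 := mul_bin_diag N v.
rewrite mulnDr [(N * (h.-1 * _))%N]mulnCA [(N * ((h + k.-1) * _))%N]mulnCA e1 e2 -/c.
rewrite !mulnA -mulnDl mulnAC; congr (_ * _)%N.
rewrite {}/c {e1 e2}/N; case: h h0 => // h _; case: k k0 => // k _ /=.
have -> : (k.+1 * v.+1 + h.+1 - v.+1 = k * v.+1 + h.+1)%N by lia.
rewrite !(mulSn, mulnS, addSn, addnS, mulnDr, mulnDl, addnA); lia.
Qed.

Section WalkSurvival.
Variables (R : numFieldType) (k : nat) (p : R).
Hypothesis k_gt1 : (1 < k)%N.

Definition survival (h L : nat) : R := coin_expect p L (fun bs => (walk_avoids0 k h bs)%:R).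

Lemma survivalS h L : (0 < h)%N -> survival h L.+1 =
  p * (if h == 1%N then 0 else survival h.-1 L) + (1 - p) * survival (h + k.-1) L.
Proof.
move=> h0; rewrite /survival coin_expectS.
have up bs : walk_avoids0 k h (true :: bs) = (h != 1%N) && walk_avoids0 k h.-1 bs.
  rewrite walk_avoids0_cons /walk_step (gtn_eqF h0) /=.
  by have -> : (h.-1 != 0%N) = (h != 1%N) by lia.
have down bs : walk_avoids0 k h (false :: bs) = walk_avoids0 k (h + k.-1) bs.
  by rewrite walk_avoids0_cons /walk_step (gtn_eqF h0) /= addn_eq0 (gtn_eqF h0).
under eq_coin_expect => bs _ do rewrite up.
under [X in _ + _ * X]eq_coin_expect => bs _ do rewrite down.
by case: eqP => [_|//]; rewrite coin_expect_cst mulr0.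
Qed.

Lemma survival0S L : survival 0 L.+1 = survival k.-1 L.
Proof.
have restart b bs : walk_avoids0 k 0 (b :: bs) = walk_avoids0 k k.-1 bs.
  have km1 : (k.-1 != 0)%N by lia.
  by rewrite walk_avoids0_cons /walk_step eqxx km1.
rewrite /survival coin_expectS.
under eq_coin_expect => bs _ do rewrite restart.
under [X in _ + _ * X]eq_coin_expect => bs _ do rewrite restart.
by rewrite -mulrDl addrC subrK mul1r.
Qed.

(* Probability that the walk started at [h] first hits [0] at time [k u + h]. *)
Definition first_passage (h u : nat) : R :=
  h%:R / (k * u + h)%:R * 'C(k * u + h, u)%:R * p ^+ (k.-1 * u + h) * (1 - p) ^+ u.

Lemma first_passage0 h : (0 < h)%N -> first_passage h 0 = p ^+ h.
Proof.
by move=> h0; rewrite /first_passage !muln0 !add0n bin0 divff ?pnatr_eq0 -?lt0n // !mulr1 mul1r.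
Qed.

Lemma first_passage_rec h u : (0 < h)%N -> first_passage h u =
  p * (if h == 1%N then (u == 0%N)%:R else first_passage h.-1 u) +
  (1 - p) * (if u is v.+1 then first_passage (h + k.-1) v else 0).
Proof.
move=> h0; have k0 : (0 < k)%N by lia.
case: u => [|v].
  rewrite first_passage0 // mulr0 addr0; case: eqP => [->|h1]; first by rewrite mulr1 expr1.
  by rewrite first_passage0 -?exprS ?prednK //; lia.
have -> : (if h == 1%N then (v.+1 == 0%N)%:R else first_passage h.-1 v.+1) =
    first_passage h.-1 v.+1.
  by case: eqP => // ->; rewrite /first_passage mulr0n !mul0r.
have := first_passage_binomial_rec v k0 h0.
set N := (k * v.+1 + h)%N; set M := N.-1.
set c := 'C(N, v.+1); set X := 'C(M, v.+1); set Y := 'C(M, v) => binom_rec.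
have HR : h%:R * c%:R * M%:R = N%:R * (h.-1%:R * X%:R + (h%:R + k.-1%:R) * Y%:R) :> R.
  by rewrite -natrD -!natrM -natrD -natrM binom_rec.
have N0 : (N%:R : R) != 0 by rewrite pnatr_eq0 /N; lia.
have M0 : (M%:R : R) != 0 by rewrite pnatr_eq0 /M /N; lia.
have key : h%:R / N%:R * c%:R =
    h.-1%:R / M%:R * X%:R + (h%:R + k.-1%:R) / M%:R * Y%:R :> R.
  apply/eqP; rewrite -subr_eq0.
  have -> : h%:R / N%:R * c%:R - (h.-1%:R / M%:R * X%:R + (h%:R + k.-1%:R) / M%:R * Y%:R) =
      (h%:R * c%:R * M%:R - N%:R * (h.-1%:R * X%:R + (h%:R + k.-1%:R) * Y%:R))
        / (N%:R * M%:R) :> R.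
    by field; rewrite N0 M0.
  by rewrite HR subrr mul0r.
rewrite /first_passage -/N.
have -> : (k * v.+1 + h.-1 = M)%N by rewrite /M /N; lia.
have -> : (k * v + (h + k.-1) = M)%N by rewrite /M /N; lia.
have -> : (k.-1 * v + (h + k.-1) = k.-1 * v.+1 + h)%N by lia.
have -> : (k.-1 * v.+1 + h = (k.-1 * v.+1 + h.-1).+1)%N by lia.
by rewrite -/X -/Y !exprS natrD key; ring.
Qed.

Definition hitting_prob (h L : nat) : R :=
  \sum_(0 <= u < L.+1) (if (k * u + h <= L)%N then first_passage h u else 0).

Lemma hitting_probS h L : (0 < h)%N -> hitting_prob h L.+1 =
  p * (if h == 1%N then 1 else hitting_prob h.-1 L) + (1 - p) * hitting_prob (h + k.-1) L.
Proof.
move=> h0; rewrite /hitting_prob.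
under eq_bigr => u _ do rewrite (first_passage_rec u h0).
have if_lin (c : bool) (A B : R) : (if c then p * A + (1 - p) * B else 0) =
    p * (if c then A else 0) + (1 - p) * (if c then B else 0).
  by case: c; rewrite ?mulr0 ?addr0.
under eq_bigr do rewrite if_lin.
rewrite big_split /= -!mulr_sumr; congr (_ * _ + _ * _).
  case: eqP => [h1|/eqP h1].
    rewrite big_nat_recl // muln0 add0n h1 /= big1 ?addr0 // => u _.
    by case: ifP.
  rewrite big_nat_recr //= ifF ?addr0; last by apply/negbTE; rewrite -ltnNge; nia.
  apply: eq_big_nat => u /andP[_ hu].
  by have -> : (k * u + h <= L.+1)%N = (k * u + h.-1 <= L)%N by apply/idP/idP; lia.
rewrite [LHS]big_nat_recl //= (_ : (if _ then 0 else 0) = 0); last by case: ifP.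
rewrite add0r; apply: eq_big_nat => u _.
by have -> : (k * u.+1 + h <= L.+1)%N = (k * u + (h + k.-1) <= L)%N by apply/idP/idP; lia.
Qed.

Lemma survival_hitting h L : (0 < h)%N -> survival h L = 1 - hitting_prob h L.
Proof.
elim: L h => [|L IH] h h0.
  rewrite /survival coin_expect0 /hitting_prob big_nat1 ifF ?subr0 //.
  by apply/negbTE; rewrite -ltnNge; lia.
rewrite survivalS // hitting_probS // (IH (h + k.-1)%N); last by lia.
case: eqP => [_|h1]; first by ring.
by rewrite (IH h.-1); [ring | lia].
Qed.

Lemma hitting_prob_restart j :
  hitting_prob k.-1 (k * j.+1).-1 = \sum_(0 <= u < j.+1) first_passage k.-1 u.
Proof.
rewrite /hitting_prob.
have hj : (j.+1 <= (k * j.+1).-1.+1)%N.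
  by rewrite prednK ?muln_gt0 ?(ltnW k_gt1) //; exact: leq_pmull (ltnW k_gt1).
rewrite (big_cat_nat _ hj) //= [X in _ + X]big1_seq ?addr0.
  by apply: eq_big_nat => u /andP[_ hu]; rewrite ifT //; nia.
move=> u /andP[_]; rewrite mem_index_iota => /andP[hu _]; rewrite ifF //.
apply/negbTE; rewrite -ltnNge.
have : (k * j.+1 <= k * u)%N by rewrite leq_pmul2l; lia.
lia.
Qed.

Lemma first_passage_scoef u : 1 - p != 0 ->
  first_passage k.-1 u = (1 - p)^-1 * scoef k u.+1 * (p ^+ k.-1 * (1 - p)) ^+ u.+1.
Proof.
move=> q0; rewrite /first_passage /scoef.
have -> : (k * u.+1).-1 = (k * u + k.-1)%N by rewrite mulnS; lia.
rewrite exprMn -exprM mulnS [(k.-1 + _)%N]addnC exprS.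
by field; rewrite q0 andbT -natrM -natrD pnatr_eq0; lia.
Qed.

Lemma sum_first_passage_le1 m : 0 <= p <= 1 ->
  \sum_(0 <= u < m) first_passage k.-1 u <= 1.
Proof.
move=> p01; case: m => [|j]; first by rewrite big_geq.
rewrite -hitting_prob_restart -subr_ge0 -survival_hitting; last by lia.
by apply: coin_expect_ge0 => // bs; exact: ler0n.
Qed.

End WalkSurvival.

Lemma survival0_closed (R : numFieldType) k (p : R) j : (1 < k)%N ->
  survival k p 0 (k * j.+1) = 1 - \sum_(0 <= u < j.+1) first_passage k p k.-1 u.
Proof.
move=> k1; rewrite -(prednK (_ : 0 < k * j.+1)%N) ?muln_gt0 ?(ltnW k1) //.
by rewrite survival0S // survival_hitting ?hitting_prob_restart //; lia.
Qed.

Lemma Rexp_survival (R : numFieldType) k n (p : R) : (0 < k)%N -> (0 < n)%N ->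
  Rexp k n p = 1 + \sum_(j < n.-1) survival k p 0 (k * j.+1).
Proof.
move=> k0 n0; have -> : Rexp k n p = coin_expect p (k * n) (fun bs => (Yval k n bs)%:R) by [].
rewrite (@eq_coin_expect _ _ _ _ (fun bs =>
  1 + \sum_(j < n.-1) (walk_avoids0 k 0 (take (k * j.+1) bs))%:R)); last first.
  by move=> bs sz; rewrite Yval_avoids0 // natrD natr_sum.
rewrite coin_expectDl coin_expect_sum; congr (_ + _); apply: eq_bigr => j _.
rewrite (@coin_expect_take _ _ _ _ (fun bs => (walk_avoids0 k 0 bs)%:R)) //.
by rewrite leq_pmul2l //; have := ltn_ord j; lia.
Qed.

Lemma sum_triangle (R : zmodType) m (f : nat -> R) :
  \sum_(0 <= j < m) \sum_(0 <= u < j.+1) f u = \sum_(0 <= u < m) f u *+ (m - u).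
Proof.
elim: m => [|m IH]; first by rewrite !big_geq.
rewrite big_nat_recr //= IH.
rewrite [RHS](eq_big_nat _ _ (F2 := fun u => f u *+ (m - u) + f u)); last first.
  by move=> u /andP[_ hu]; rewrite subSn // mulrSr.
rewrite big_split /=; congr (_ + _).
by rewrite big_nat_recr //= subnn mulr0n addr0.
Qed.

Lemma Rexp_closed (R : numFieldType) k n (p : R) : (1 < k)%N -> (0 < n)%N -> 1 - p != 0 ->
  Rexp k n p = n%:R - (1 - p)^-1 *
    \sum_(1 <= i < n) (n - i)%:R * scoef k i * (p ^+ k.-1 * (1 - p)) ^+ i.
Proof.
move=> k1 n0 q0; rewrite Rexp_survival ?(ltnW k1) //.
under eq_bigr => j _ do rewrite survival0_closed //.
rewrite sumrB sumr_const card_ord.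
rewrite -(big_mkord xpredT (fun j => \sum_(0 <= u < j.+1) first_passage k p k.-1 u)).
rewrite sum_triangle addrA nat1r prednK //.
congr (_ - _); rewrite big_add1 /= mulr_sumr; apply: eq_big_nat => u /andP[_ hu].
rewrite first_passage_scoef // -mulr_natr.
have -> : (n - u.+1 = n.-1 - u)%N by lia.
ring.
Qed.

Local Open Scope classical_set_scope.
Local Open Scope ring_scope.

Lemma mul_sum_nat_geometric (R : comPzRingType) (z : R) M :
  (\sum_(0 <= m < M) m%:R * z ^+ m) * (1 - z) ^+ 2 =
  z - M%:R * z ^+ M + (M%:R - 1) * z ^+ M.+1.
Proof.
elim: M => [|M IH]; first by rewrite big_geq // mul0r; ring.
by rewrite big_nat_recr //= mulrDl IH -natr1 !exprS; ring.
Qed.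

Lemma sum_convolution_nat (R : comPzRingType) (a : nat -> R) (z : R) N :
  \sum_(0 <= n < N) (\sum_(0 <= i < n) (n - i)%:R * a i) * z ^+ n =
  \sum_(0 <= i < N) a i * z ^+ i * \sum_(0 <= m < N - i) m%:R * z ^+ m.
Proof.
elim: N => [|N IH]; first by rewrite !big_geq.
rewrite big_nat_recr //= IH [in RHS]big_nat_recr //= subSnn big_nat1 mul0r mulr0 addr0.
rewrite mulr_suml -big_split /=; apply: eq_big_nat => i /andP[_ hi].
rewrite subSn ?(ltnW hi) // big_nat_recr //= mulrDr; congr (_ + _).
by rewrite mulrCA -!mulrA -exprD subnKC ?(ltnW hi).
Qed.

Lemma dist_le_cvg (R : realType) (u v : R ^nat) (l : R) :
  v @ \oo --> 0 -> (forall n, `|u n - l| <= v n) -> u @ \oo --> l.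
Proof.
move=> v0 uv; apply: (@squeeze_cvgr _ _ _ _ (fun n => l - v n) (fun n => l + v n)).
- by apply: nearW => n; have := uv n; rewrite ler_distl.
- by rewrite -[X in _ --> X]subr0; apply: cvgB => //; exact: cvg_cst.
- by rewrite -[X in _ --> X]addr0; apply: cvgD => //; exact: cvg_cst.
Qed.

Lemma cvg_nat_mul_expr (R : realType) (z : R) : `|z| < 1 ->
  (fun n => n%:R * z ^+ n) @ \oo --> (0 : R).
Proof.
move=> z_lt1; set w := `|z|; have w0 : 0 <= w by exact: normr_ge0.
suff /cvg_series_cvg_0 : cvgn (series (fun n => n%:R * w ^+ n)).
  have -> : (fun n => n%:R * w ^+ n) = (fun n => `|n%:R * z ^+ n|).
    by apply/funext => n; rewrite normrM normr_nat normrX.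
  exact: norm_cvg0.
apply: nondecreasing_is_cvgn.
  by apply: nondecreasing_series => n; rewrite mulr_ge0 ?exprn_ge0.
exists (w / (1 - w) ^+ 2) => _ [M _ <-].
have q0 : 0 < (1 - w) ^+ 2 by rewrite exprn_gt0 // subr_gt0.
rewrite ler_pdivlMr // /series /= mul_sum_nat_geometric exprS.
have t0 : 0 <= w ^+ M by exact: exprn_ge0.
have Mt : 0 <= M%:R * w ^+ M by exact: mulr_ge0.
move: z_lt1 t0 Mt; rewrite -/w; set t := w ^+ M; nra.
Qed.

Lemma sum_nat_geometric_dist (R : realType) (z : R) M : `|z| < 1 ->
  `|\sum_(0 <= m < M) m%:R * z ^+ m - z / (1 - z) ^+ 2| <=
  (`|z - 1| * (M%:R * `|z| ^+ M) + `|z| * `|z| ^+ M) / `|1 - z| ^+ 2.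
Proof.
move=> z_lt1; have q0 : 1 - z != 0.
  by apply: contraTneq z_lt1 => /eqP; rewrite subr_eq0 => /eqP <-; rewrite normr1 ltxx.
have -> : \sum_(0 <= m < M) m%:R * z ^+ m - z / (1 - z) ^+ 2 =
    ((z - 1) * (M%:R * z ^+ M) - z * z ^+ M) / (1 - z) ^+ 2.
  rewrite -[\sum_(0 <= m < M) _](mulfK (expf_neq0 2 q0)) mul_sum_nat_geometric exprS.
  by field.
rewrite normrM normfV normrX ler_wpM2r ?invr_ge0 ?exprn_ge0 //.
by apply: le_trans (ler_normB _ _) _; rewrite !normrM normr_nat normrX.
Qed.

Lemma cvg_sum_nat_geometric (R : realType) (z : R) : `|z| < 1 ->
  (fun N => \sum_(0 <= m < N) m%:R * z ^+ m) @ \oo --> z / (1 - z) ^+ 2.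
Proof.
move=> z_lt1; have w_lt1 : `| `|z| | < 1 by rewrite normr_id.
apply: (dist_le_cvg _ (fun M => sum_nat_geometric_dist M z_lt1)).
have -> : 0 = (`|z - 1| * 0 + `|z| * 0) / `|1 - z| ^+ 2 :> R.
  by rewrite !mulr0 addr0 mul0r.
apply: cvgMr_tmp; apply: cvgD; apply: cvgMl_tmp.
  exact: cvg_nat_mul_expr.
exact: cvg_expr.
Qed.

Lemma cvg_series_bounded_coef (R : realType) (a : nat -> R) (c z : R) :
  (forall i, `|a i| <= c) -> `|z| < 1 ->
  cvg ((fun N => \sum_(0 <= i < N) a i * z ^+ i) @ \oo).
Proof.
move=> a_le z_lt1; have w_lt1 : `| `|z| | < 1 by rewrite normr_id.
apply: (@normed_cvg R R^o); apply: (@series_le_cvg R _ (geometric c `|z|)).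
- by move=> n; exact: normr_ge0.
- by move=> n; rewrite /geometric /= mulr_ge0 ?exprn_ge0 // (le_trans _ (a_le 0)).
- by move=> n; rewrite /geometric /= normrM normrX; apply: ler_wpM2r; rewrite ?exprn_ge0.
- exact: is_cvg_geometric_series.
Qed.

Lemma convolution_tail_le (R : realType) (z : R) i N : `|z| < 1 -> (i <= N)%N ->
  `|z ^+ i| * `|\sum_(0 <= m < N - i) m%:R * z ^+ m - z / (1 - z) ^+ 2| <=
  (2 * (N%:R * `|z| ^+ N) + `|z| ^+ N) / `|1 - z| ^+ 2.
Proof.
move=> z_lt1 le_iN; have w0 : 0 <= `|z| by exact: normr_ge0.
rewrite normrX.
apply: le_trans (ler_wpM2l (exprn_ge0 i w0) (sum_nat_geometric_dist (N - i) z_lt1)) _.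
rewrite (mulrA (`|z| ^+ i)); apply: ler_wpM2r; first by rewrite invr_ge0 exprn_ge0.
have wN : `|z| ^+ i * `|z| ^+ (N - i) = `|z| ^+ N by rewrite -exprD subnKC.
have -> : `|z| ^+ i * (`|z - 1| * ((N - i)%:R * `|z| ^+ (N - i)) + `|z| * `|z| ^+ (N - i)) =
    `|z - 1| * ((N - i)%:R * `|z| ^+ N) + `|z| * `|z| ^+ N by rewrite -wN; ring.
have t0 : 0 <= `|z| ^+ N by exact: exprn_ge0.
have c2 : `|z - 1| <= 2 by apply: le_trans (ler_normB _ _) _; rewrite normr1; lra.
have h1 : (N - i)%:R * `|z| ^+ N <= N%:R * `|z| ^+ N by rewrite ler_wpM2r // ler_nat leq_subr.
have h2 : `|z| * `|z| ^+ N <= `|z| ^+ N by rewrite ler_piMl // ltW.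
have h3 : `|z - 1| * ((N - i)%:R * `|z| ^+ N) <= 2 * ((N - i)%:R * `|z| ^+ N).
  by rewrite ler_wpM2r // mulr_ge0.
lra.
Qed.

Lemma cvg_sum_convolution_nat (R : realType) (a : nat -> R) (c z : R) :
  (forall i, 0 <= a i) -> (forall N, \sum_(0 <= i < N) a i <= c) -> `|z| < 1 ->
  (fun N => \sum_(0 <= n < N) (\sum_(0 <= i < n) (n - i)%:R * a i) * z ^+ n) @ \oo -->
  limn (fun N => \sum_(0 <= i < N) a i * z ^+ i) * (z / (1 - z) ^+ 2).
Proof.
move=> a_ge0 a_sum z_lt1; set w := `|z|; set K := `|1 - z| ^+ 2.
set B := fun N => \sum_(0 <= i < N) a i * z ^+ i; set Cinf := z / (1 - z) ^+ 2.
have a_le i : `|a i| <= c.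
  rewrite ger0_norm //; apply: le_trans (a_sum i.+1); rewrite big_nat_recr //= lerDr.
  by apply: sumr_ge0 => j _.
pose E N := \sum_(0 <= i < N) a i * z ^+ i *
  (\sum_(0 <= m < N - i) m%:R * z ^+ m - Cinf).
have -> : (fun N => \sum_(0 <= n < N) (\sum_(0 <= i < n) (n - i)%:R * a i) * z ^+ n) =
    (fun N => B N * Cinf + E N).
  apply/funext => N; rewrite sum_convolution_nat /B /E mulr_suml -big_split /=.
  by apply: eq_bigr => i _; rewrite mulrBr addrC subrK.
rewrite -[X in _ --> X]addr0; apply: cvgD; first exact: cvgMr_tmp (cvg_series_bounded_coef a_le z_lt1).
pose T N := (2 * (N%:R * w ^+ N) + w ^+ N) / K.
have T_ge0 N : 0 <= T N.
  by rewrite /T divr_ge0 ?exprn_ge0 ?addr_ge0 ?mulr_ge0 ?exprn_ge0 ?normr_ge0.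
apply: (dist_le_cvg (v := fun N => c * T N)) => [|N].
  have w_lt1 : `|w| < 1 by rewrite normr_id.
  have -> : 0 = c * ((2 * 0 + 0) / K) :> R by rewrite mulr0 addr0 mul0r mulr0.
  apply: cvgMl_tmp; apply: cvgMr_tmp; apply: cvgD; last exact: cvg_expr.
  by apply: cvgMl_tmp; exact: cvg_nat_mul_expr.
rewrite subr0 /E; apply: le_trans (ler_norm_sum _ _ _) _.
apply: (@le_trans _ _ (\sum_(0 <= i < N) a i * T N)).
  apply: ler_sum_nat => i /andP[_ hi].
  rewrite normrM normrM (ger0_norm (a_ge0 i)) -mulrA ler_wpM2l //.
  exact: convolution_tail_le z_lt1 (ltnW hi).
by rewrite -mulr_suml; apply: ler_wpM2r.
Qed.

Lemma sumr_nat_from1 (R : zmodType) (f : nat -> R) N : f 0%N = 0 ->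
  \sum_(1 <= i < N) f i = \sum_(0 <= i < N) f i.
Proof. by move=> f0; case: N => [|N]; [rewrite !big_geq | rewrite [RHS]big_ltn // f0 add0r]. Qed.

Lemma normr_le_partial_sum_bound (R : numDomainType) (a : nat -> R) c :
  (forall i, 0 <= a i) -> (forall N, \sum_(0 <= i < N) a i <= c) -> forall i, `|a i| <= c.
Proof.
move=> a_ge0 a_sum i; rewrite ger0_norm //; apply: le_trans (a_sum i.+1).
by rewrite big_nat_recr //= lerDr sumr_ge0.
Qed.

(* Junk value: the definition divides by [(k * 0).-1 = 0]. *)
Lemma scoef0 (R : numFieldType) k : scoef k 0 = 0 :> R.
Proof. by rewrite /scoef muln0 /= invr0 mulr0 mul0r. Qed.

Lemma scoef_ge0 (R : numFieldType) k i : 0 <= scoef k i :> R.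
Proof. by rewrite /scoef !mulr_ge0 ?invr_ge0. Qed.

Lemma sum_scoef_weight_le (R : numFieldType) k (p : R) N : (1 < k)%N -> 0 < p < 1 ->
  \sum_(0 <= i < N) scoef k i * (p ^+ k.-1 * (1 - p)) ^+ i <= 1 - p.
Proof.
move=> k1 /andP[p0 p1]; have q0 : 0 < 1 - p by rewrite subr_gt0.
case: N => [|N]; first by rewrite big_geq // ltW.
rewrite big_nat_recl // scoef0 mul0r add0r.
have weight u : scoef k u.+1 * (p ^+ k.-1 * (1 - p)) ^+ u.+1 =
    (1 - p) * first_passage k p k.-1 u.
  by rewrite first_passage_scoef ?lt0r_neq0 // !mulrA divff ?lt0r_neq0 // mul1r.
under eq_bigr do rewrite weight.
rewrite -mulr_sumr; apply: ler_piMr; first exact: ltW.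
by apply: sum_first_passage_le1 => //; rewrite !ltW.
Qed.

Lemma Rexp0 (R : numDomainType) k (p : R) : Rexp k 0 p = 0.
Proof. by rewrite /Rexp big1 // => bs _; rewrite /Yval /= mulr0. Qed.

Lemma Rexp_generating_function (R : realType) k (p z : R) :
  (1 < k)%N -> 0 < p < 1 -> `|z| < 1 ->
  cvg ((fun N => \sum_(1 <= i < N) scoef k i * (p ^+ k.-1 * (1 - p) * z) ^+ i) @ \oo)
  /\ ((fun N => \sum_(1 <= n < N) Rexp k n p * z ^+ n) @ \oo -->
      z / (1 - z) ^+ 2 * (1 - (1 - p)^-1 *
        limn (fun N => \sum_(1 <= i < N) scoef k i * (p ^+ k.-1 * (1 - p) * z) ^+ i))).
Proof.
move=> k1 p01 z1; have [p0 p1] := andP p01.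
have qn0 : 1 - p != 0 by rewrite subr_eq0 eq_sym lt_eqF.
set x := p ^+ k.-1 * (1 - p); pose a i := scoef k i * x ^+ i.
have a_ge0 i : 0 <= a i.
  by rewrite mulr_ge0 ?scoef_ge0 ?exprn_ge0 // mulr_ge0 ?exprn_ge0 ?subr_ge0 ?ltW.
have a_sum N : \sum_(0 <= i < N) a i <= 1 - p by exact: sum_scoef_weight_le.
have -> : (fun N => \sum_(1 <= i < N) scoef k i * (x * z) ^+ i) =
    (fun N => \sum_(0 <= i < N) a i * z ^+ i).
  apply/funext => N; rewrite sumr_nat_from1 ?scoef0 ?mul0r //.
  by apply: eq_bigr => i _; rewrite exprMn mulrA.
have -> : (fun N => \sum_(1 <= n < N) Rexp k n p * z ^+ n) =
    (fun N => \sum_(0 <= n < N) n%:R * z ^+ n -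
      (1 - p)^-1 * \sum_(0 <= n < N) (\sum_(0 <= i < n) (n - i)%:R * a i) * z ^+ n).
  apply/funext => N; rewrite sumr_nat_from1 ?Rexp0 ?mul0r // mulr_sumr -sumrB.
  apply: eq_bigr => -[|n] _; first by rewrite Rexp0 big_geq // !mul0r mulr0 subrr.
  rewrite Rexp_closed // sumr_nat_from1; last by rewrite scoef0 mulr0 mul0r.
  rewrite mulrBl -mulrA; congr (_ - _ * (_ * _)).
  by apply: eq_bigr => i _; rewrite /a mulrA.
split; first exact: cvg_series_bounded_coef (normr_le_partial_sum_bound a_ge0 a_sum) z1.
set L := limn _; have -> : z / (1 - z) ^+ 2 * (1 - (1 - p)^-1 * L) =
    z / (1 - z) ^+ 2 - (1 - p)^-1 * (L * (z / (1 - z) ^+ 2)) by ring.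
apply: cvgB; first exact: cvg_sum_nat_geometric.
by apply: cvgMl_tmp; exact: cvg_sum_convolution_nat.
Qed.

Unset Implicit Arguments.

Theorem theorem5p1 (R : realType) (k : nat) (p : R) :
  (2 <= k)%N -> 0 < p < 1 ->
  [/\ Rexp k 1 p = 1,
      (forall n : nat, (2 <= n)%N ->
         Rexp k n p = n%:R - (1 - p)^-1 *
           \sum_(1 <= i < n) (n - i)%:R * scoef k i * (p ^+ k.-1 * (1 - p)) ^+ i)
    & (forall z : R, `|z| < 1 ->
         cvg ((fun N => \sum_(1 <= i < N) scoef k i * (p ^+ k.-1 * (1 - p) * z) ^+ i) @ \oo)
         /\ ((fun N => \sum_(1 <= n < N) Rexp k n p * z ^+ n) @ \oo -->
            z / (1 - z) ^+ 2 *
              (1 - (1 - p)^-1 * limn (fun N => \sum_(1 <= i < N) scoef k i * (p ^+ k.-1 * (1 - p) * z) ^+ i))))].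
Proof.
move=> k2 p01; have qn0 : 1 - p != 0.
  by case/andP: p01 => _ p1; rewrite subr_eq0 eq_sym lt_eqF.
split; last by move=> z; exact: Rexp_generating_function.
  by rewrite Rexp_closed // big_geq // mulr0 subr0.
by move=> n n2; rewrite Rexp_closed //; lia.
Qed.
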